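(* Let $m,n\ge 1$, $A=[a_{ij}]$ an $m\times n$ matrix with entries in $\mathbb{R}\cup\{-\infty\}$, and $B=[b_{ji}]$ an $n\times m$ matrix with entries in $\mathbb{R}\cup\{+\infty\}$. Let $\lambda\in\mathbb{R}$ be an eigenvalue of the bipartite min-max-plus system $\mathcal{M}$ defined by $A,B$, let $A_\lambda=-\lambda\otimes A$, $B_\lambda=-\lambda\otimes B$, and define a sequence $y(l+1)=\mathcal{N}(y(l))$ from an initial state vector $y(0)$. Suppose $y(r)=y(s)$ for some integers $r>s\ge 0$ and let $v=y(s)\oplus y(s+1)\oplus\cdots\oplus y(r-1)$. If the iteration is restarted with $x^*(0)=v$ and $x^*(l+1)=\mathcal{N}(x^*(l))$, then $x^*(l+1)\ge x^*(l)$ (componentwise) for all $l=0,1,2,\dots$.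
   Context: Notation: $\epsilon=-\infty$, $\tau=+\infty$. For scalars, $r\oplus s=\max\{r,s\}$, $r\oplus' s=\min\{r,s\}$, $r\otimes s=r+s$; $\oplus$ of vectors is the componentwise maximum. For a scalar $\alpha\in\mathbb{R}$ and a matrix or vector $X$, $\alpha\otimes X$ adds $\alpha$ to every entry (infinite entries are unchanged). Max-plus product: $(A\otimes w)_i=\max_{1\le j\le n}(a_{ij}+w_j)$; min-plus product: $(B\otimes' u)_j=\min_{1\le i\le m}(b_{ji}+u_i)$. Convention for infinite sums: $-\infty+x=-\infty$ for $x\ne+\infty$, $+\infty+x=+\infty$ for $x\ne-\infty$, and in max-plus products $-\infty$ is absorbing while in min-plus products $+\infty$ is absorbing. For $v=\begin{pmatrix}u\\ w\end{pmatrix}$ ($u$ of length $m$, $w$ of length $n$): $\mathcal{M}(v)=\begin{pmatrix}A\otimes w\\ B\otimes' u\end{pmatrix}$ and $\mathcal{N}(v)=\begin{pmatrix}A_\lambda\otimes w\\ B_\lambda\otimes' u\end{pmatrix}$. A real number $\lambda$ is an eigenvalue of the system $x(l+1)=\mathcal{M}(x(l))$ if there exists $v\in\mathbb{R}^{m+n}$ with $\mathcal{M}(v)=\lambda\otimes v$. *)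

From HB Require Import structures.
From mathcomp Require Import all_boot all_order all_algebra.
From mathcomp Require Import reals constructive_ereal.
Set Implicit Arguments. Unset Strict Implicit. Unset Printing Implicit Defensive.
Import Order.TTheory GRing.Theory Num.Theory.
Local Open Scope ring_scope.
Local Open Scope ereal_scope.

Definition state (R : realType) (m n : nat) : Type :=
  (('I_m -> \bar R) * ('I_n -> \bar R))%type.

(* max-plus product (A (x) w)_i = max_j (a_ij + w_j); -oo is absorbing
   (this is ereal's default addition). *)
Definition maxplus (R : realType) (m n : nat) (A : 'M[\bar R]_(m, n))
  (w : 'I_n -> \bar R) : 'I_m -> \bar R :=
  fun i => \big[maxe/-oo]_(j < n) (A i j + w j).

(* min-plus product (B (x)' u)_j = min_i (b_ji + u_i); +oo is absorbing
   (ereal's dual addition). *)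
Definition minplus (R : realType) (m n : nat) (B : 'M[\bar R]_(n, m))
  (u : 'I_m -> \bar R) : 'I_n -> \bar R :=
  fun j => \big[mine/+oo]_(i < m) (B j i + u i)%dE.

Definition Msys (R : realType) (m n : nat) (A : 'M[\bar R]_(m, n))
  (B : 'M[\bar R]_(n, m)) (v : state R m n) : state R m n :=
  (maxplus A v.2, minplus B v.1).

Definition shiftmx (R : realType) (p q : nat) (alpha : R)
  (X : 'M[\bar R]_(p, q)) : 'M[\bar R]_(p, q) :=
  \matrix_(i, j) (alpha%:E + X i j).

Definition is_eigenvalue (R : realType) (m n : nat) (A : 'M[\bar R]_(m, n))
  (B : 'M[\bar R]_(n, m)) (lambda : R) : Prop :=
  exists (u : 'I_m -> R) (w : 'I_n -> R),
    Msys A B (fun i => (u i)%:E, fun j => (w j)%:E) =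
    (fun i => (lambda + u i)%:E, fun j => (lambda + w j)%:E).

Definition state_le (R : realType) (m n : nat) (x y : state R m n) : Prop :=
  (forall i, x.1 i <= y.1 i) /\ (forall j, x.2 j <= y.2 j).

Definition state_max_range (R : realType) (m n : nat) (y : nat -> state R m n)
  (s r : nat) : state R m n :=
  (fun i => \big[maxe/-oo]_(s <= k < r) (y k).1 i,
   fun j => \big[maxe/-oo]_(s <= k < r) (y k).2 j).

From HB Require Import structures.
From mathcomp Require Import all_boot all_order all_algebra.
From mathcomp Require Import reals constructive_ereal.
Set Implicit Arguments. Unset Strict Implicit. Unset Printing Implicit Defensive.
Import Order.TTheory GRing.Theory Num.Theory.
Local Open Scope ring_scope.
Local Open Scope ereal_scope.

(* The map N is monotone for the componentwise order.  Along the cycle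
   y(s), ..., y(r-1) every state is the N-image of its cyclic predecessor,
   which lies below v; hence every y(k) lies below N(v), and so does their
   maximum v.  Monotonicity then propagates x*(0) <= x*(1) to all l. *)

Lemma le_Msys (R : realType) (m n : nat) (A : 'M[\bar R]_(m, n))
  (B : 'M[\bar R]_(n, m)) (x z : state R m n) :
  state_le x z -> state_le (Msys A B x) (Msys A B z).
Proof.
move=> [le_u le_w]; split => /= i.
- by apply: le_bigmax2 => j _; exact: leeD2l.
- by apply: le_bigmin2 => j _; exact: DualAddTheoryRealDomain.lee_dD2l.
Qed.

Lemma increasing_orbit (T : Type) (le : T -> T -> Prop) (f : T -> T)
  (x : nat -> T) :
  (forall a b, le a b -> le (f a) (f b)) -> (forall l, x l.+1 = f (x l)) ->
  le (x 0%N) (x 1%N) -> forall l, le (x l) (x l.+1).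
Proof.
move=> f_homo xS x01; elim=> [|l IHl]; first exact: x01.
by have := f_homo _ _ IHl; rewrite -!xS.
Qed.

Lemma cycle_pred (T : Type) (f : T -> T) (y : nat -> T) (s r : nat) :
  (s < r)%N -> y r = y s -> (forall l, y l.+1 = f (y l)) ->
  forall k, (s <= k < r)%N -> exists2 k', (s <= k' < r)%N & y k = f (y k').
Proof.
move=> lt_sr y_rs yS k /andP[le_sk lt_kr].
have r_pos : (0 < r)%N := leq_ltn_trans (leq0n s) lt_sr.
have [-> | ne_ks] := eqVneq k s.
  exists r.-1; first by rewrite prednK // leqnn andbT -ltnS prednK.
  by rewrite -yS prednK.
have lt_sk : (s < k)%N by rewrite ltn_neqAle eq_sym ne_ks.
have k_pos : (0 < k)%N := leq_ltn_trans (leq0n s) lt_sk.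
exists k.-1; last by rewrite -yS prednK.
by rewrite prednK // (ltnW lt_kr) andbT -ltnS prednK.
Qed.

Section StateMaxRange.
Variables (R : realType) (m n : nat) (y : nat -> state R m n) (s r : nat).

Lemma le_state_max_range k :
  (s <= k < r)%N -> state_le (y k) (state_max_range y s r).
Proof.
by move=> k_in; split => i; apply: (le_bigmax_seq _ k); rewrite ?mem_index_iota.
Qed.

Lemma state_max_range_le (z : state R m n) :
  (forall k, (s <= k < r)%N -> state_le (y k) z) ->
  state_le (state_max_range y s r) z.
Proof.
move=> le_yz; split => i /=; rewrite big_nat_cond;
  apply: bigmax_le => [|k]; rewrite ?leNye // andbT => /le_yz [] //.
Qed.

Lemma state_max_range_le_Msys (A : 'M[\bar R]_(m, n)) (B : 'M[\bar R]_(n, m)) :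
  (s < r)%N -> y r = y s -> (forall l, y l.+1 = Msys A B (y l)) ->
  state_le (state_max_range y s r) (Msys A B (state_max_range y s r)).
Proof.
move=> lt_sr y_rs yS; apply: state_max_range_le => k /(cycle_pred lt_sr y_rs yS).
by move=> [k' k'_in ->]; apply/le_Msys/le_state_max_range.
Qed.

End StateMaxRange.

Theorem lemma1 (R : realType) (m n : nat) (hm : (1 <= m)%N) (hn : (1 <= n)%N)
  (A : 'M[\bar R]_(m, n)) (B : 'M[\bar R]_(n, m))
  (hA : forall i j, A i j != +oo) (hB : forall j i, B j i != -oo)
  (lambda : R) (hlam : is_eigenvalue A B lambda)
  (y : nat -> state R m n)
  (y0u : 'I_m -> R) (y0w : 'I_n -> R)
  (hy0 : y 0%N = (fun i => (y0u i)%:E, fun j => (y0w j)%:E))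
  (hy : forall l, y l.+1 = Msys (shiftmx (- lambda) A) (shiftmx (- lambda) B) (y l))
  (r s : nat) (hsr : (s < r)%N) (hrs : y r = y s)
  (xs : nat -> state R m n)
  (hx0 : xs 0%N = state_max_range y s r)
  (hx : forall l, xs l.+1 = Msys (shiftmx (- lambda) A) (shiftmx (- lambda) B) (xs l)) :
  forall l, state_le (xs l) (xs l.+1).
Proof.
apply: (increasing_orbit _ hx); first exact: le_Msys.
by rewrite hx hx0; apply: state_max_range_le_Msys.
Qed.
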